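(* Let $d\geq 3$ and let $(M,g)$ be the Kasner spacetime $M=(0,\infty)\times\mathbb{R}^d$, $g=-dt^2+\sum_{i=1}^d t^{2p_i}\,dx_i^2$, with $\sum_i p_i=1$, $\sum_i p_i^2=1$ and at least one $p_i<0$, time-oriented by $\partial_t$. Let $\tau:[a,b)\to M$ be a future (respectively past) directed timelike geodesic that is future (respectively past) inextendible. Then $(t\circ\tau)(s)\to\infty$ (respectively $(t\circ\tau)(s)\to 0$) as $s\to b$.
   Context: $t:M\to(0,\infty)$ is the first coordinate. A curve $\tau:[a,b)\to M$ is future (past) inextendible if it does not extend continuously to $b$ (in the respective time direction). *)

From Stdlib Require Import Reals.
From Coquelicot Require Import Coquelicot.
Open Scope R_scope.

(* sum over the spatial indices i = 0, ..., d-1 *)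
Definition sumd (d : nat) (f : nat -> R) : R :=
  match d with O => 0 | S n => sum_f_R0 f n end.

Definition kasner_exponents (d : nat) (p : nat -> R) : Prop :=
  sumd d p = 1 /\ sumd d (fun i => p i ^ 2) = 1 /\
  exists i, (i < d)%nat /\ p i < 0.

Definition gcoef (p : nat -> R) (i : nat) (t : R) : R := Rpower t (2 * p i).

(* A curve in M = (0,oo) x R^d is given by its coordinates
   tt : R -> R (time coordinate) and xx i : R -> R (i < d).
   It is defined on [a, b), where b may be +oo. *)
Definition in_dom (a : R) (b : Rbar) (s : R) : Prop := a <= s /\ Rbar_lt s b.

Definition to_end (b : Rbar) : (R -> Prop) -> Prop :=
  match b with
  | Finite r => at_left r
  | p_infty => Rbar_locally p_infty
  | m_infty => Rbar_locally m_infty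
  end.

Definition in_M (a : R) (b : Rbar) (tt : R -> R) : Prop :=
  forall s, in_dom a b s -> 0 < tt s.

(* Geodesic equations of g = -dt^2 + sum t^(2p_i) dx_i^2:
     t'' + sum_i p_i t^(2p_i - 1) (x_i')^2 = 0
     x_i'' + (2 p_i / t) t' x_i' = 0
   (Christoffel symbols Gamma^t_ii = p_i t^(2p_i-1), Gamma^i_ti = p_i / t),
   required on the interior (a,b) of the parameter interval, with the
   coordinates twice differentiable there. *)
Definition kasner_geodesic (d : nat) (p : nat -> R) (a : R) (b : Rbar)
    (tt : R -> R) (xx : nat -> R -> R) : Prop :=
  in_M a b tt /\
  forall s, a < s -> Rbar_lt s b ->
    ex_derive tt s /\ ex_derive (Derive tt) s /\
    (forall i, (i < d)%nat -> ex_derive (xx i) s /\ ex_derive (Derive (xx i)) s) /\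
    Derive (Derive tt) s
      + sumd d (fun i => p i * Rpower (tt s) (2 * p i - 1) * (Derive (xx i) s) ^ 2) = 0 /\
    (forall i, (i < d)%nat ->
       Derive (Derive (xx i)) s + 2 * p i / tt s * Derive tt s * Derive (xx i) s = 0).

Definition timelike (d : nat) (p : nat -> R) (a : R) (b : Rbar)
    (tt : R -> R) (xx : nat -> R -> R) : Prop :=
  forall s, a < s -> Rbar_lt s b ->
    - (Derive tt s) ^ 2 + sumd d (fun i => gcoef p i (tt s) * (Derive (xx i) s) ^ 2) < 0.

(* time orientation by d/dt: a timelike tangent is future directed iff
   g(tau', d/dt) = - t' < 0, i.e. t' > 0 *)
Definition future_directed (a : R) (b : Rbar) (tt : R -> R) : Prop :=
  forall s, a < s -> Rbar_lt s b -> 0 < Derive tt s.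
Definition past_directed (a : R) (b : Rbar) (tt : R -> R) : Prop :=
  forall s, a < s -> Rbar_lt s b -> Derive tt s < 0.

Definition extends_at_end (d : nat) (b : Rbar) (tt : R -> R) (xx : nat -> R -> R) : Prop :=
  exists (t0 : R) (x0 : nat -> R), 0 < t0 /\
    filterlim tt (to_end b) (locally t0) /\
    forall i, (i < d)%nat -> filterlim (xx i) (to_end b) (locally (x0 i)).

Definition inextendible (d : nat) (b : Rbar) (tt : R -> R) (xx : nat -> R -> R) : Prop :=
  ~ extends_at_end d b tt xx.

From Stdlib Require Import Reals Lra Lia Classical.
From Coquelicot Require Import Coquelicot.
Open Scope R_scope.

(* The metric does not depend on the x_i, so the momenta t^(2 p_i) x_i' are
   conserved, and so is the energy g(tau', tau') = -m^2 < 0.  Hence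
   t'^2 = m^2 + sum_i t^(2 p_i) x_i'^2 >= m^2, and t moves monotonically at
   speed at least m.  If the parameter interval is infinite this forces
   t -> oo to the future and is impossible to the past (t > 0).  If it is
   finite and t stays in a compact [lo, hi] of (0, oo) near the end, the
   conservation laws bound all velocities, so the geodesic has a limit in M,
   contradicting inextendibility. *)

Lemma MVT_segment (f : R -> R) (u v : R) :
  u <= v -> (forall x, u <= x <= v -> ex_derive f x) ->
  exists c, u <= c <= v /\ f v - f u = Derive f c * (v - u).
Proof.
  intros Huv Hd.
  destruct (MVT_gen f u v (Derive f)) as [c [Hc Heq]];
    rewrite ?Rmin_left, ?Rmax_right in *; try lra.
  - intros x Hx. apply Derive_correct, Hd. lra.
  - intros x Hx. apply continuity_pt_filterlim.
    apply (ex_derive_continuous (K := R_AbsRing) (V := R_NormedModule)), Hd. lra.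
  - exists c. split; [lra | exact Heq].
Qed.

Section DerivativeBounds.

Variables (a : R) (b : Rbar) (f : R -> R).
Hypothesis f_derivable : forall s, a < s -> Rbar_lt s b -> ex_derive f s.

Lemma MVT_interval (u v : R) : a < u -> u <= v -> Rbar_lt v b ->
  exists c, a < c /\ Rbar_lt c b /\ f v - f u = Derive f c * (v - u).
Proof.
  intros Hu Huv Hv.
  assert (Hin : forall x, u <= x <= v -> a < x /\ Rbar_lt x b).
  { intros x Hx. split; [lra|]. destruct b; simpl in *; lra || exact I. }
  destruct (MVT_segment f u v Huv) as [c [Hc Heq]].
  - intros x Hx. apply f_derivable; apply Hin; exact Hx.
  - exists c. destruct (Hin c Hc). auto.
Qed.

Lemma Derive_ge_increment (mu : R) :
  (forall s, a < s -> Rbar_lt s b -> mu <= Derive f s) ->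
  forall u v, a < u -> u <= v -> Rbar_lt v b -> mu * (v - u) <= f v - f u.
Proof.
  intros Hmu u v Hu Huv Hv.
  destruct (MVT_interval u v Hu Huv Hv) as [c [Hc1 [Hc2 ->]]].
  apply Rmult_le_compat_r; [lra | auto].
Qed.

Lemma Derive_le_increment (mu : R) :
  (forall s, a < s -> Rbar_lt s b -> Derive f s <= mu) ->
  forall u v, a < u -> u <= v -> Rbar_lt v b -> f v - f u <= mu * (v - u).
Proof.
  intros Hmu u v Hu Huv Hv.
  destruct (MVT_interval u v Hu Huv Hv) as [c [Hc1 [Hc2 ->]]].
  apply Rmult_le_compat_r; [lra | auto].
Qed.

End DerivativeBounds.

Lemma is_derive_0_interval_const (a : R) (b : Rbar) (f : R -> R) :
  (forall s, a < s -> Rbar_lt s b -> is_derive f s 0) ->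
  forall u v, a < u -> Rbar_lt u b -> a < v -> Rbar_lt v b -> f u = f v.
Proof.
  intros Hd.
  assert (Hex : forall s, a < s -> Rbar_lt s b -> ex_derive f s).
  { intros s H1 H2. exists 0. auto. }
  assert (Hle : forall u v, a < u -> u <= v -> Rbar_lt v b -> f u = f v).
  { intros u v Hu Huv Hv.
    destruct (MVT_interval a b f Hex u v Hu Huv Hv) as [c [Hc1 [Hc2 Hc]]].
    rewrite (is_derive_unique _ _ _ (Hd c Hc1 Hc2)) in Hc. lra. }
  intros u v Hu Hub Hv Hvb.
  destruct (Rle_dec u v); [apply Hle | symmetry; apply Hle]; auto; lra.
Qed.

Lemma bounded_Derive_lipschitz (f : R -> R) (s1 r K : R) :
  (forall s, s1 <= s < r -> ex_derive f s) ->
  (forall s, s1 <= s < r -> Rabs (Derive f s) <= K) ->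
  forall u v, s1 <= u < r -> s1 <= v < r -> Rabs (f v - f u) <= K * Rabs (v - u).
Proof.
  intros Hd HK.
  assert (Hle : forall u v, s1 <= u <= v -> v < r -> Rabs (f v - f u) <= K * Rabs (v - u)).
  { intros u v Huv Hv.
    destruct (MVT_segment f u v) as [c [Hc ->]]; [lra | intros; apply Hd; lra |].
    rewrite Rabs_mult. apply Rmult_le_compat_r; [apply Rabs_pos | apply HK; lra]. }
  intros u v Hu Hv. destruct (Rle_dec u v).
  - apply Hle; lra.
  - rewrite Rabs_minus_sym, (Rabs_minus_sym v). apply Hle; lra.
Qed.

Lemma at_left_between (s1 r : R) : s1 < r -> at_left r (fun s => s1 < s < r).
Proof.
  intros Hs. exists (mkposreal _ (proj2 (Rlt_0_minus _ _) Hs)). intros y Hy Hyr.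
  change (Rabs (y - r) < r - s1) in Hy. apply Rabs_lt_between in Hy. lra.
Qed.

(* Cauchy criterion: a Lipschitz function oscillates by less than eps on
   (r - eps / (K + 1), r). *)
Lemma bounded_Derive_ex_lim_at_left (f : R -> R) (s1 r K : R) : s1 < r ->
  (forall s, s1 <= s < r -> ex_derive f s) ->
  (forall s, s1 <= s < r -> Rabs (Derive f s) <= K) ->
  exists y, filterlim f (at_left r) (locally y).
Proof.
  intros Hs Hd HK.
  assert (HK0 : 0 <= K).
  { apply Rle_trans with (Rabs (Derive f s1)); [apply Rabs_pos | apply HK; lra]. }
  pose proof (bounded_Derive_lipschitz f s1 r K Hd HK) as Hlip.
  apply (proj1 (filterlim_locally_cauchy (U := R_CompleteSpace) (F := at_left r) f)).
  intros eps.
  exists (fun s => Rmax s1 (r - eps / (K + 1)) < s < r). split.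
  - apply at_left_between. apply Rmax_lub_lt; [lra |].
    pose proof (cond_pos eps). assert (0 < eps / (K + 1)) by (apply Rdiv_lt_0_compat; lra). lra.
  - intros u v Hu Hv.
    pose proof (Rmax_l s1 (r - eps / (K + 1))). pose proof (Rmax_r s1 (r - eps / (K + 1))).
    assert (Huv : (K + 1) * Rabs (v - u) < eps).
    { apply Rmult_lt_reg_r with (/ (K + 1)); [apply Rinv_0_lt_compat; lra |].
      replace ((K + 1) * Rabs (v - u) * / (K + 1)) with (Rabs (v - u)) by (field; lra).
      apply Rabs_lt_between. lra. }
    pose proof (Rabs_pos (v - u)).
    pose proof (Hlip u v ltac:(lra) ltac:(lra)).
    change (Rabs (f v - f u) < eps). lra.
Qed.

Lemma at_left_p_infty_of_nondecreasing (f : R -> R) (s0 r : R) :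
  (forall u v, s0 <= u <= v -> v < r -> f u <= f v) ->
  (forall M, exists s, s0 <= s < r /\ M < f s) ->
  filterlim f (at_left r) (Rbar_locally p_infty).
Proof.
  intros Hmon Hunb P [M HP]. destruct (Hunb M) as [s [Hs HMs]].
  apply filter_imp with (2 := at_left_between s r ltac:(lra)).
  intros u Hu. apply HP. pose proof (Hmon s u ltac:(lra) ltac:(lra)). lra.
Qed.

Lemma at_left_0_of_nonincreasing (f : R -> R) (s0 r : R) :
  (forall u v, s0 <= u <= v -> v < r -> f v <= f u) ->
  (forall s, s0 <= s < r -> 0 < f s) ->
  (forall eps, 0 < eps -> exists s, s0 <= s < r /\ f s < eps) ->
  filterlim f (at_left r) (locally 0).
Proof.
  intros Hmon Hpos Hsmall P [eps HP]. destruct (Hsmall eps (cond_pos eps)) as [s [Hs Hfs]].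
  apply filter_imp with (2 := at_left_between s r ltac:(lra)).
  intros u Hu. apply HP. change (Rabs (f u - 0) < eps).
  pose proof (Hmon s u ltac:(lra) ltac:(lra)). pose proof (Hpos u ltac:(lra)).
  rewrite Rminus_0_r, Rabs_pos_eq; lra.
Qed.

Lemma Rbar_interval_inhabited (a : R) (b : Rbar) :
  Rbar_lt a b -> exists s, a < s /\ Rbar_lt s b.
Proof.
  destruct b as [r | |]; simpl; intros Hab.
  - exists ((a + r) / 2). simpl. lra.
  - exists (a + 1). split; [lra | exact I].
  - contradiction.
Qed.

Lemma Rbar_lt_finite_or_p_infty (a : R) (b : Rbar) :
  Rbar_lt a b -> (exists r, b = Finite r) \/ b = p_infty.
Proof. destruct b as [r | |]; simpl; intros Hab; [left; exists r | right | contradiction]; auto. Qed.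

Lemma Rabs_le_sqrt (x q : R) : x ^ 2 <= q -> Rabs x <= sqrt q.
Proof.
  intros H. rewrite <- (sqrt_pow2 (Rabs x)), pow2_abs by apply Rabs_pos.
  apply sqrt_le_1_alt, H.
Qed.

Lemma sqrt_le_Rabs (x m : R) : m <= x ^ 2 -> sqrt m <= Rabs x.
Proof.
  intros H. rewrite <- (sqrt_pow2 (Rabs x)), pow2_abs by apply Rabs_pos.
  apply sqrt_le_1_alt, H.
Qed.

Lemma Rpower_lower_bound (lo hi t e : R) : 0 < lo -> lo <= t <= hi ->
  exp (- (Rabs e * (Rabs (ln lo) + Rabs (ln hi)))) <= Rpower t e.
Proof.
  intros Hlo Ht. unfold Rpower.
  assert (Hln : Rabs (ln t) <= Rabs (ln lo) + Rabs (ln hi)).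
  { pose proof (ln_le lo t Hlo (proj1 Ht)). pose proof (ln_le t hi ltac:(lra) (proj2 Ht)).
    apply Rabs_le. split.
    - pose proof (Rle_abs (- ln lo)). rewrite Rabs_Ropp in *. pose proof (Rabs_pos (ln hi)). lra.
    - pose proof (Rle_abs (ln hi)). pose proof (Rabs_pos (ln lo)). lra. }
  assert (Hexp : - (Rabs e * (Rabs (ln lo) + Rabs (ln hi))) <= e * ln t).
  { pose proof (Rle_abs (- (e * ln t))). rewrite Rabs_Ropp, Rabs_mult in *.
    pose proof (Rmult_le_compat_l _ _ _ (Rabs_pos e) Hln). lra. }
  destruct Hexp as [Hlt | ->]; [left; apply exp_increasing, Hlt | lra].
Qed.

Lemma sumd_le (d : nat) (f g : nat -> R) :
  (forall i, (i < d)%nat -> f i <= g i) -> sumd d f <= sumd d g.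
Proof.
  destruct d as [|n]; simpl; intros H; [lra |].
  apply sum_Rle. intros i Hi. apply H. lia.
Qed.

Lemma sumd_nonneg (d : nat) (f : nat -> R) : (forall i, 0 <= f i) -> 0 <= sumd d f.
Proof. destruct d as [|n]; simpl; intros H; [lra | apply cond_pos_sum, H]. Qed.

Lemma sumd_mult_l (d : nat) (c : R) (f : nat -> R) :
  sumd d (fun i => c * f i) = c * sumd d f.
Proof.
  destruct d as [|n]; simpl; [ring |].
  rewrite scal_sum. apply sum_eq. intros i _. ring.
Qed.

Lemma is_derive_sumd (d : nat) (f : nat -> R -> R) (df : nat -> R) (s : R) :
  (forall i, (i < d)%nat -> is_derive (f i) s (df i)) ->
  is_derive (fun x => sumd d (fun i => f i x)) s (sumd d df).
Proof.
  destruct d as [|n]; simpl.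
  - intros _. apply (is_derive_const (K := R_AbsRing) (V := R_NormedModule)).
  - induction n as [|n IH]; intros Hf; simpl.
    + apply Hf. lia.
    + apply (is_derive_plus (K := R_AbsRing) (V := R_NormedModule)).
      * apply IH. intros i Hi. apply Hf. lia.
      * apply Hf. lia.
Qed.

Section KasnerGeodesic.

Variables (d : nat) (p : nat -> R) (a : R) (b : Rbar) (tt : R -> R) (xx : nat -> R -> R).
Hypothesis geodesic : kasner_geodesic d p a b tt xx.

Definition kasner_momentum (i : nat) (s : R) : R := gcoef p i (tt s) * Derive (xx i) s.

Definition kasner_energy (s : R) : R :=
  - Derive tt s ^ 2 + sumd d (fun i => gcoef p i (tt s) * Derive (xx i) s ^ 2).

Lemma tt_pos (s : R) : a < s -> Rbar_lt s b -> 0 < tt s.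
Proof. intros H1 H2. apply (proj1 geodesic). split; [lra | exact H2]. Qed.

Lemma is_derive_kasner_momentum (i : nat) (s : R) : (i < d)%nat -> a < s -> Rbar_lt s b ->
  is_derive (kasner_momentum i) s 0.
Proof.
  intros Hi H1 H2. pose proof (tt_pos s H1 H2) as Ht.
  destruct (proj2 geodesic s H1 H2) as [Htd [_ [Hxd [_ Hx]]]].
  destruct (Hxd i Hi) as [_ Hxd2]. specialize (Hx i Hi).
  unfold kasner_momentum, gcoef, Rpower. auto_derive.
  - auto.
  - change (fun x => tt x) with tt. change (fun x => Derive (xx i) x) with (Derive (xx i)).
    replace (Derive (Derive (xx i)) s)
      with (- (2 * p i / tt s * Derive tt s * Derive (xx i) s)) by lra.
    field. lra.
Qed.

Lemma is_derive_kasner_energy_term (i : nat) (s : R) : (i < d)%nat -> a < s -> Rbar_lt s b ->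
  is_derive (fun x => gcoef p i (tt x) * Derive (xx i) x ^ 2) s
    (- 2 * Derive tt s * (p i * Rpower (tt s) (2 * p i - 1) * Derive (xx i) s ^ 2)).
Proof.
  intros Hi H1 H2. pose proof (tt_pos s H1 H2) as Ht.
  destruct (proj2 geodesic s H1 H2) as [Htd [_ [Hxd [_ Hx]]]].
  destruct (Hxd i Hi) as [_ Hxd2]. specialize (Hx i Hi).
  unfold Rminus. rewrite Rpower_plus, Rpower_Ropp, Rpower_1 by exact Ht.
  unfold gcoef, Rpower. auto_derive.
  - auto.
  - change (fun x => tt x) with tt. change (fun x => Derive (xx i) x) with (Derive (xx i)).
    replace (Derive (Derive (xx i)) s)
      with (- (2 * p i / tt s * Derive tt s * Derive (xx i) s)) by lra.
    field. lra.
Qed.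

Lemma is_derive_kasner_energy (s : R) : a < s -> Rbar_lt s b -> is_derive kasner_energy s 0.
Proof.
  intros H1 H2.
  destruct (proj2 geodesic s H1 H2) as [Htd [Htd2 [_ [Ht _]]]].
  set (S := fun x => sumd d (fun i => gcoef p i (tt x) * Derive (xx i) x ^ 2)).
  assert (HS : is_derive S s
    (sumd d (fun i => - 2 * Derive tt s * (p i * Rpower (tt s) (2 * p i - 1) * Derive (xx i) s ^ 2)))).
  { apply is_derive_sumd. intros i Hi. apply is_derive_kasner_energy_term; auto. }
  change (is_derive (fun x => - Derive tt x ^ 2 + S x) s 0).
  auto_derive.
  - split; [exact Htd2 | split; [eexists; exact HS | exact I]].
  - change (fun x => Derive tt x) with (Derive tt). change (fun x => S x) with S.
    rewrite (is_derive_unique _ _ _ HS), sumd_mult_l.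
    set (Sum := sumd _ _) in *. nra.
Qed.

Lemma kasner_momentum_const (i : nat) (u v : R) : (i < d)%nat ->
  a < u -> Rbar_lt u b -> a < v -> Rbar_lt v b -> kasner_momentum i u = kasner_momentum i v.
Proof. intros Hi. apply is_derive_0_interval_const. intros. apply is_derive_kasner_momentum; auto. Qed.

Lemma kasner_energy_const (u v : R) :
  a < u -> Rbar_lt u b -> a < v -> Rbar_lt v b -> kasner_energy u = kasner_energy v.
Proof. apply is_derive_0_interval_const. exact is_derive_kasner_energy. Qed.

Lemma Derive_tt_sqr_ge_energy (s0 s : R) : a < s0 -> Rbar_lt s0 b -> a < s -> Rbar_lt s b ->
  - kasner_energy s0 <= Derive tt s ^ 2.
Proof.
  intros H1 H2 H3 H4. rewrite (kasner_energy_const s0 s) by assumption.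
  assert (0 <= sumd d (fun i => gcoef p i (tt s) * Derive (xx i) s ^ 2)).
  { apply sumd_nonneg. intros i. apply Rmult_le_pos; [left; apply exp_pos | apply pow2_ge_0]. }
  unfold kasner_energy. lra.
Qed.

Section BoundedTime.

Variables (r s1 lo hi : R).
Hypotheses (b_finite : b = Finite r) (s1_in : a < s1 < r) (lo_pos : 0 < lo)
  (tt_bounded : forall s, s1 <= s < r -> lo <= tt s <= hi).

Let gcoef_min (i : nat) : R := exp (- (Rabs (2 * p i) * (Rabs (ln lo) + Rabs (ln hi)))).

Let in_interval (s : R) : s1 <= s < r -> a < s /\ Rbar_lt s b.
Proof. intros Hs. rewrite b_finite. simpl. lra. Qed.

Lemma Derive_xx_eq_momentum (i : nat) (s : R) : (i < d)%nat -> s1 <= s < r ->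
  Derive (xx i) s = kasner_momentum i s1 / gcoef p i (tt s).
Proof.
  intros Hi Hs. destruct (in_interval s Hs), (in_interval s1 ltac:(lra)).
  rewrite (kasner_momentum_const i s1 s) by assumption.
  unfold kasner_momentum. field. apply Rgt_not_eq, exp_pos.
Qed.

Lemma Derive_xx_bounded (i : nat) : (i < d)%nat -> forall s, s1 <= s < r ->
  Rabs (Derive (xx i) s) <= Rabs (kasner_momentum i s1) / gcoef_min i.
Proof.
  intros Hi s Hs. rewrite Derive_xx_eq_momentum by assumption.
  unfold Rdiv. rewrite Rabs_mult, Rabs_inv, (Rabs_pos_eq (gcoef _ _ _)) by (left; apply exp_pos).
  apply Rmult_le_compat_l; [apply Rabs_pos |].
  apply Rinv_le_contravar; [apply exp_pos |].
  apply (Rpower_lower_bound lo hi); auto.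
Qed.

Lemma Derive_tt_bounded (s : R) : s1 <= s < r ->
  Rabs (Derive tt s)
    <= sqrt (- kasner_energy s1 + sumd d (fun i => kasner_momentum i s1 ^ 2 / gcoef_min i)).
Proof.
  intros Hs. destruct (in_interval s Hs), (in_interval s1 ltac:(lra)).
  apply Rabs_le_sqrt.
  rewrite (kasner_energy_const s1 s) by assumption.
  unfold kasner_energy.
  enough (sumd d (fun i => gcoef p i (tt s) * Derive (xx i) s ^ 2)
            <= sumd d (fun i => kasner_momentum i s1 ^ 2 / gcoef_min i)) by lra.
  apply sumd_le. intros i Hi.
  assert (Hg : 0 < gcoef p i (tt s)) by apply exp_pos.
  rewrite Derive_xx_eq_momentum by assumption.
  replace (gcoef p i (tt s) * (kasner_momentum i s1 / gcoef p i (tt s)) ^ 2)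
    with (kasner_momentum i s1 ^ 2 / gcoef p i (tt s)) by (field; lra).
  apply Rmult_le_compat_l; [apply pow2_ge_0 |].
  apply Rinv_le_contravar; [apply exp_pos |].
  apply (Rpower_lower_bound lo hi); auto.
Qed.

Lemma extends_of_bounded_time : extends_at_end d b tt xx.
Proof.
  assert (Hder : forall s, s1 <= s < r -> ex_derive tt s /\
            forall i, (i < d)%nat -> ex_derive (xx i) s).
  { intros s Hs. destruct (in_interval s Hs) as [H1 H2].
    destruct (proj2 geodesic s H1 H2) as [Ht [_ [Hx _]]].
    split; [exact Ht | intros i Hi; apply (Hx i Hi)]. }
  destruct (bounded_Derive_ex_lim_at_left tt s1 r _ ltac:(lra)
              (fun s Hs => proj1 (Hder s Hs)) Derive_tt_bounded) as [t0 Ht0].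
  exists t0, (fun i => iota (fun y => filterlim (xx i) (at_left r) (locally y))).
  rewrite b_finite. simpl. split; [| split; [exact Ht0 |]].
  - enough (lo <= t0) by lra.
    apply (closed_filterlim_loc (F := at_left r) tt (fun u => lo <= u) t0 Ht0);
      [| apply closed_ge].
    apply filter_imp with (2 := at_left_between s1 r ltac:(lra)).
    intros s Hs. apply tt_bounded. lra.
  - intros i Hi.
    destruct (bounded_Derive_ex_lim_at_left (xx i) s1 r _ ltac:(lra)
                (fun s Hs => proj2 (Hder s Hs) i Hi) (Derive_xx_bounded i Hi)) as [y Hy].
    replace (iota _) with y; [exact Hy | symmetry].
    exact (iota_filterlim_locally (K := R_AbsRing) (V := R_CompleteNormedModule) (xx i) y Hy).
Qed.

End BoundedTime.

Hypotheses (timelike_tau : timelike d p a b tt xx) (inextendible_tau : inextendible d b tt xx).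

Lemma speed_lower_bound (s0 s : R) : a < s0 -> Rbar_lt s0 b -> a < s -> Rbar_lt s b ->
  0 < sqrt (- kasner_energy s0) <= Rabs (Derive tt s).
Proof.
  intros H1 H2 H3 H4. split.
  - apply sqrt_lt_R0. pose proof (timelike_tau s0 H1 H2) as H. change (kasner_energy s0 < 0) in H. lra.
  - apply sqrt_le_Rabs, (Derive_tt_sqr_ge_energy s0 s H1 H2 H3 H4).
Qed.

Lemma tt_derivable (s : R) : a < s -> Rbar_lt s b -> ex_derive tt s.
Proof. intros H1 H2. exact (proj1 (proj2 geodesic s H1 H2)). Qed.

Lemma future_directed_tt_to_p_infty : Rbar_lt a b -> future_directed a b tt ->
  filterlim tt (to_end b) (Rbar_locally p_infty).
Proof.
  intros Hab Hfut. destruct (Rbar_interval_inhabited a b Hab) as [s0 [Ha0 Hb0]].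
  pose proof (tt_pos s0 Ha0 Hb0) as Ht0.
  set (mu := sqrt (- kasner_energy s0)).
  assert (Hmu : 0 < mu) by exact (proj1 (speed_lower_bound s0 s0 Ha0 Hb0 Ha0 Hb0)).
  assert (Hinc : forall u v, a < u -> u <= v -> Rbar_lt v b -> mu * (v - u) <= tt v - tt u).
  { apply (Derive_ge_increment a b tt tt_derivable). intros s H1 H2.
    destruct (speed_lower_bound s0 s Ha0 Hb0 H1 H2) as [_ Hs].
    rewrite Rabs_pos_eq in Hs; [exact Hs | left; exact (Hfut s H1 H2)]. }
  destruct (Rbar_lt_finite_or_p_infty a b Hab) as [[r Hb] | Hb];
    rewrite Hb in Hb0, Hinc |- *; simpl in Hb0, Hinc |- *.
  - assert (Hmon : forall u v, s0 <= u <= v -> v < r -> tt u <= tt v).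
    { intros u v Huv Hv. pose proof (Hinc u v ltac:(lra) (proj2 Huv) Hv).
      pose proof (Rmult_le_pos mu (v - u) (Rlt_le _ _ Hmu) ltac:(lra)). lra. }
    apply (at_left_p_infty_of_nondecreasing tt s0 r Hmon). intros M.
    apply NNPP. intros Hno. apply inextendible_tau.
    apply (extends_of_bounded_time r s0 (tt s0) M Hb (conj Ha0 Hb0) Ht0).
    intros s Hs. split; [apply Hmon; lra |].
    apply Rnot_lt_le. intros HM. apply Hno. exists s. split; assumption.
  - intros P [M HP]. exists (Rmax s0 (s0 + (M - tt s0) / mu)). intros s Hs. apply HP.
    pose proof (Rmax_l s0 (s0 + (M - tt s0) / mu)). pose proof (Rmax_r s0 (s0 + (M - tt s0) / mu)).
    pose proof (Hinc s0 s Ha0 ltac:(lra) I).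
    assert (Hh : mu * ((M - tt s0) / mu) < mu * (s - s0)) by (apply Rmult_lt_compat_l; lra).
    replace (mu * ((M - tt s0) / mu)) with (M - tt s0) in Hh by (field; lra). lra.
Qed.

Lemma past_directed_tt_to_0 : Rbar_lt a b -> past_directed a b tt ->
  filterlim tt (to_end b) (locally 0).
Proof.
  intros Hab Hpast. destruct (Rbar_interval_inhabited a b Hab) as [s0 [Ha0 Hb0]].
  set (mu := sqrt (- kasner_energy s0)).
  assert (Hmu : 0 < mu) by exact (proj1 (speed_lower_bound s0 s0 Ha0 Hb0 Ha0 Hb0)).
  assert (Hdec : forall u v, a < u -> u <= v -> Rbar_lt v b -> tt v - tt u <= - mu * (v - u)).
  { apply (Derive_le_increment a b tt tt_derivable). intros s H1 H2.
    destruct (speed_lower_bound s0 s Ha0 Hb0 H1 H2) as [_ Hs].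
    fold mu in Hs. rewrite Rabs_left in Hs; [lra | exact (Hpast s H1 H2)]. }
  assert (Hpos : forall s, a < s -> Rbar_lt s b -> 0 < tt s) by exact tt_pos.
  destruct (Rbar_lt_finite_or_p_infty a b Hab) as [[r Hb] | Hb];
    rewrite Hb in Hb0, Hdec, Hpos |- *; simpl in Hb0, Hdec, Hpos |- *.
  - assert (Hmon : forall u v, s0 <= u <= v -> v < r -> tt v <= tt u).
    { intros u v Huv Hv. pose proof (Hdec u v ltac:(lra) (proj2 Huv) Hv).
      pose proof (Rmult_le_pos mu (v - u) (Rlt_le _ _ Hmu) ltac:(lra)). lra. }
    apply (at_left_0_of_nonincreasing tt s0 r Hmon); [intros s Hs; apply Hpos; lra |].
    intros eps Heps. apply NNPP. intros Hno. apply inextendible_tau.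
    apply (extends_of_bounded_time r s0 eps (tt s0) Hb (conj Ha0 Hb0) Heps).
    intros s Hs. split; [| apply Hmon; lra].
    apply Rnot_lt_le. intros He. apply Hno. exists s. split; assumption.
  - exfalso.
    pose proof (Hpos s0 Ha0 I) as Ht0.
    assert (Hq : 0 < tt s0 / mu) by (apply Rdiv_lt_0_compat; [exact Ht0 | exact Hmu]).
    set (s := s0 + tt s0 / mu + 1).
    pose proof (Hdec s0 s Ha0 ltac:(unfold s; lra) I) as Hs.
    pose proof (Hpos s ltac:(unfold s; lra) I).
    replace (- mu * (s - s0)) with (- tt s0 - mu) in Hs by (unfold s; field; lra).
    lra.
Qed.

End KasnerGeodesic.

Theorem lemma3p2 (d : nat) (p : nat -> R) (a : R) (b : Rbar)
  (tt : R -> R) (xx : nat -> R -> R) :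
  (3 <= d)%nat ->
  kasner_exponents d p ->
  Rbar_lt a b ->
  kasner_geodesic d p a b tt xx ->
  timelike d p a b tt xx ->
  inextendible d b tt xx ->
  (future_directed a b tt -> filterlim tt (to_end b) (Rbar_locally p_infty)) /\
  (past_directed a b tt -> filterlim tt (to_end b) (locally 0)).
Proof.
  intros _ _ Hab Hgeo Htl Hinext. split.
  - exact (future_directed_tt_to_p_infty d p a b tt xx Hgeo Htl Hinext Hab).
  - exact (past_directed_tt_to_0 d p a b tt xx Hgeo Htl Hinext Hab).
Qed.
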